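(* The polycyclic monoid on two generators, $P_2=\mathrm{Mon}^0\langle p,q,p^{-1},q^{-1}\mid pp^{-1}=1=qq^{-1},\ pq^{-1}=0=qp^{-1}\rangle$ (monoid with zero), is neither left fairly amenable nor right fairly amenable.
   Context: $\mathrm{Mon}^0\langle\cdot\mid\cdot\rangle$ denotes the monoid with zero $0$ given by the presentation. For a semigroup $U$, $s\in U$, $A\subseteq U$: $s$ acts injectively on the left (right) of $A$ if $x\mapsto sx$ ($x\mapsto xs$) is injective on $A$. A finitely-additive probability measure on $U$ is $\mu:\mathcal P(U)\to[0,1]$ with $\mu(U)=1$, additive on disjoint sets; it is left fairly invariant if $\mu(sA)=\mu(A)$ whenever $s$ acts injectively on the left of $A$ (right fairly invariant analogously with $As$). $U$ is left (right) fairly amenable if such a measure exists. *)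

From Stdlib Require Import Reals List.
Import ListNotations.
Open Scope R_scope.

Definition set_union {U : Type} (A B : U -> Prop) : U -> Prop := fun x => A x \/ B x.
Definition set_disjoint {U : Type} (A B : U -> Prop) : Prop := forall x, A x -> B x -> False.
Definition set_full {U : Type} : U -> Prop := fun _ => True.
Definition set_image {U : Type} (f : U -> U) (A : U -> Prop) : U -> Prop :=
  fun y => exists x, A x /\ y = f x.

Definition fa_prob_measure {U : Type} (mu : (U -> Prop) -> R) : Prop :=
  (forall A, 0 <= mu A <= 1) /\
  mu set_full = 1 /\
  (forall A B, set_disjoint A B -> mu (set_union A B) = mu A + mu B).

Definition acts_inj_left {U : Type} (mul : U -> U -> U) (s : U) (A : U -> Prop) : Prop :=
  forall x y, A x -> A y -> mul s x = mul s y -> x = y.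
Definition acts_inj_right {U : Type} (mul : U -> U -> U) (s : U) (A : U -> Prop) : Prop :=
  forall x y, A x -> A y -> mul x s = mul y s -> x = y.

Definition left_fairly_invariant {U : Type} (mul : U -> U -> U) (mu : (U -> Prop) -> R) : Prop :=
  forall s A, acts_inj_left mul s A -> mu (set_image (fun x => mul s x) A) = mu A.
Definition right_fairly_invariant {U : Type} (mul : U -> U -> U) (mu : (U -> Prop) -> R) : Prop :=
  forall s A, acts_inj_right mul s A -> mu (set_image (fun x => mul x s) A) = mu A.

Definition left_fairly_amenable {U : Type} (mul : U -> U -> U) : Prop :=
  exists mu, fa_prob_measure mu /\ left_fairly_invariant mul mu.
Definition right_fairly_amenable {U : Type} (mul : U -> U -> U) : Prop :=
  exists mu, fa_prob_measure mu /\ right_fairly_invariant mul mu.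

(* ---------- The polycyclic monoid P_2 (concrete normal-form model) ----------
   Positive words over {p,q} are lists of bool (false = p, true = q).
   Every nonzero element of P_2 has a unique normal form a^{-1} b with a, b
   positive words; it is represented by Some (a, b).  None is the zero 0. *)
Definition P2 : Type := option (list bool * list bool).

Fixpoint strip_prefix (c w : list bool) : option (list bool) :=
  match c, w with
  | [], _ => Some w
  | x :: c', y :: w' => if Bool.eqb x y then strip_prefix c' w' else None
  | _ :: _, [] => None
  end.

(* (a^{-1} b)(c^{-1} d):  if b = b' c then a^{-1} b' d;
   if c = c' b then (c' a)^{-1} d;  otherwise 0. *)
Definition P2mul (x y : P2) : P2 :=
  match x, y with
  | Some (a, b), Some (c, d) =>
      match strip_prefix (rev c) (rev b) with
      | Some r => Some (a, rev r ++ d)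
      | None =>
          match strip_prefix (rev b) (rev c) with
          | Some r => Some (rev r ++ a, d)
          | None => None
          end
      end
  | _, _ => None
  end.

Definition P2one : P2 := Some ([], []).
Definition P2zero : P2 := None.
Definition P2p : P2 := Some ([], [false]).
Definition P2q : P2 := Some ([], [true]).
Definition P2pinv : P2 := Some ([false], []).
Definition P2qinv : P2 := Some ([true], []).

Example P2_rel1 : P2mul P2p P2pinv = P2one. Proof. reflexivity. Qed.
Example P2_rel2 : P2mul P2q P2qinv = P2one. Proof. reflexivity. Qed.
Example P2_rel3 : P2mul P2p P2qinv = P2zero. Proof. reflexivity. Qed.
Example P2_rel4 : P2mul P2q P2pinv = P2zero. Proof. reflexivity. Qed.
Example P2_nf : P2mul P2pinv P2q = Some ([false], [true]). Proof. reflexivity. Qed.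

(* A zero [z] acts injectively on any singleton [{u}] and maps it onto [{z}], so a fairly
   invariant measure gives every singleton the same mass as [{z}]; in particular
   [mu {z} <= 1/2].  In [P2] the left multiplications by [p^-1] and [q^-1] are injective on
   the whole monoid, so their images have measure [1]; but these images meet only in [0],
   which forces [mu {0} = 1].  The right case is the left case for the opposite
   multiplication, using [p] and [q]. *)
From Stdlib Require Import Reals List Lra Classical FunctionalExtensionality PropExtensionality.
Import ListNotations.
Open Scope R_scope.

Lemma set_ext {U : Type} (A B : U -> Prop) : (forall x, A x <-> B x) -> A = B.
Proof.
  intro H; apply functional_extensionality; intro x.
  apply propositional_extensionality; auto.
Qed.

Section FaProbMeasure.

Variables (U : Type) (mu : (U -> Prop) -> R).
Hypothesis mu_prob : fa_prob_measure mu.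

Lemma fa_measure_ge0 (A : U -> Prop) : 0 <= mu A.
Proof. destruct mu_prob as [H01 _]; apply H01. Qed.

Lemma fa_measure_add_le1 (A B : U -> Prop) : set_disjoint A B -> mu A + mu B <= 1.
Proof.
  intro HAB; destruct mu_prob as [H01 [_ Hadd]].
  rewrite <- (Hadd _ _ HAB); apply H01.
Qed.

Lemma fa_measure_atom_eq1 (S T : U -> Prop) (z : U) :
  mu S = 1 -> mu T = 1 -> T z -> (forall y, S y -> T y -> y = z) ->
  mu (fun y => y = z) = 1.
Proof.
  intros HS HT Tz HST; destruct mu_prob as [_ [_ Hadd]].
  set (B := fun y => T y /\ y <> z).
  assert (HT_split : T = set_union (fun y => y = z) B).
  { apply set_ext; intro y; unfold set_union, B; split.
    - intro Ty; destruct (classic (y = z)); auto.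
    - intros [->|[Ty _]]; auto. }
  assert (mu_B0 : mu B <= 0).
  { assert (HSB : set_disjoint S B) by (intros y Sy [Ty Hyz]; exact (Hyz (HST y Sy Ty))).
    pose proof (fa_measure_add_le1 _ _ HSB); lra. }
  assert (Hdisj : set_disjoint (fun y => y = z) B) by (intros y -> [_ Hzz]; exact (Hzz eq_refl)).
  rewrite HT_split, (Hadd _ _ Hdisj) in HT.
  pose proof (fa_measure_ge0 B); lra.
Qed.

Lemma fa_measure_atoms_le1 (z u : U) :
  u <> z -> mu (fun y => y = z) + mu (fun y => y = u) <= 1.
Proof. intro Huz; apply fa_measure_add_le1; intros y -> Hzu; auto. Qed.

End FaProbMeasure.

Section LeftFairlyInvariant.

Variables (U : Type) (mul : U -> U -> U) (mu : (U -> Prop) -> R).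
Hypotheses (mu_prob : fa_prob_measure mu) (mu_inv : left_fairly_invariant mul mu).

Lemma fair_measure_image_full (s : U) :
  acts_inj_left mul s set_full -> mu (set_image (mul s) set_full) = 1.
Proof.
  intro Hs; change (mu (set_image (fun x => mul s x) set_full) = 1).
  rewrite (mu_inv s _ Hs); apply mu_prob.
Qed.

Lemma fair_measure_left_zero_atom (z u : U) :
  (forall x, mul z x = z) -> mu (fun y => y = z) = mu (fun y => y = u).
Proof.
  intro Hz.
  assert (Himg : set_image (mul z) (fun y => y = u) = (fun y => y = z)).
  { apply set_ext; intro y; split.
    - intros [x [_ ->]]; apply Hz.
    - intros ->; exists u; auto. }
  rewrite <- Himg; apply (mu_inv z).
  intros x y -> ->; reflexivity.
Qed.

End LeftFairlyInvariant.

Theorem not_left_fairly_amenable_of_zero_meeting_ideals {U : Type} (mul : U -> U -> U)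
    (z u s t : U) :
  u <> z -> (forall x, mul z x = z) -> (forall x, mul x z = z) ->
  acts_inj_left mul s set_full -> acts_inj_left mul t set_full ->
  (forall y, set_image (mul s) set_full y -> set_image (mul t) set_full y -> y = z) ->
  ~ left_fairly_amenable mul.
Proof.
  intros Huz Hzl Hzr Hs Ht Hst [mu [Hmu Hinv]].
  assert (mu_z : mu (fun y => y = z) = 1).
  { apply (fa_measure_atom_eq1 U mu Hmu _ _ z
             (fair_measure_image_full U mul mu Hmu Hinv s Hs)
             (fair_measure_image_full U mul mu Hmu Hinv t Ht)); auto.
    exists z; split; [exact I | symmetry; apply Hzr]. }
  pose proof (fair_measure_left_zero_atom U mul mu Hinv z u Hzl).
  pose proof (fa_measure_atoms_le1 U mu Hmu z u Huz); lra.
Qed.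

Lemma P2mul_inv_l (b : bool) (c d : list bool) :
  P2mul (Some ([b], [])) (Some (c, d)) = Some (c ++ [b], d).
Proof.
  destruct c as [|x c] using rev_ind; [reflexivity |].
  unfold P2mul; rewrite rev_app_distr; simpl.
  rewrite rev_involutive; reflexivity.
Qed.

Lemma P2mul_gen_r (b : bool) (a c : list bool) :
  P2mul (Some (a, c)) (Some ([], [b])) = Some (a, c ++ [b]).
Proof. unfold P2mul; simpl; rewrite rev_involutive; reflexivity. Qed.

Lemma P2_one_neq_zero : P2one <> P2zero.
Proof. discriminate. Qed.

Lemma P2mul_zero_l (x : P2) : P2mul P2zero x = P2zero.
Proof. reflexivity. Qed.

Lemma P2mul_zero_r (x : P2) : P2mul x P2zero = P2zero.
Proof. destruct x as [[a b]|]; reflexivity. Qed.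

Lemma P2_inv_l_inj (b : bool) : acts_inj_left P2mul (Some ([b], [])) set_full.
Proof.
  intros [[c d]|] [[c' d']|] _ _; rewrite ?P2mul_inv_l; try discriminate; auto.
  intro E; injection E as Ec Ed.
  apply app_inj_tail in Ec as [-> _]; subst; reflexivity.
Qed.

Lemma P2_gen_r_inj (b : bool) : acts_inj_right P2mul (Some ([], [b])) set_full.
Proof.
  intros [[c d]|] [[c' d']|] _ _; rewrite ?P2mul_gen_r; try discriminate; auto.
  intro E; injection E as Ec Ed.
  apply app_inj_tail in Ed as [-> _]; subst; reflexivity.
Qed.

Lemma P2_inv_l_images_meet_in_zero (y : P2) :
  set_image (P2mul P2pinv) set_full y -> set_image (P2mul P2qinv) set_full y -> y = P2zero.
Proof.
  unfold P2pinv, P2qinv.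
  intros [[[c d]|] [_ ->]] [[[c' d']|] [_ E]]; rewrite ?P2mul_inv_l in *; try reflexivity;
    try discriminate.
  injection E as Ec _; apply app_inj_tail in Ec as [_ Hb]; discriminate.
Qed.

Lemma P2_gen_r_images_meet_in_zero (y : P2) :
  set_image (fun x => P2mul x P2p) set_full y ->
  set_image (fun x => P2mul x P2q) set_full y -> y = P2zero.
Proof.
  unfold P2p, P2q.
  intros [[[c d]|] [_ ->]] [[[c' d']|] [_ E]]; rewrite ?P2mul_gen_r in *; try reflexivity;
    try discriminate.
  injection E as _ Ed; apply app_inj_tail in Ed as [_ Hb]; discriminate.
Qed.

(* [right_fairly_amenable P2mul] is convertible to [left_fairly_amenable] of the
   opposite multiplication. *)
Theorem mainTheorem20 :
  ~ left_fairly_amenable P2mul /\ ~ right_fairly_amenable P2mul.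
Proof.
  split.
  - apply (not_left_fairly_amenable_of_zero_meeting_ideals P2mul P2zero P2one P2pinv P2qinv
             P2_one_neq_zero P2mul_zero_l P2mul_zero_r (P2_inv_l_inj false) (P2_inv_l_inj true)
             P2_inv_l_images_meet_in_zero).
  - apply (not_left_fairly_amenable_of_zero_meeting_ideals (fun x y => P2mul y x)
             P2zero P2one P2p P2q
             P2_one_neq_zero P2mul_zero_r P2mul_zero_l (P2_gen_r_inj false) (P2_gen_r_inj true)
             P2_gen_r_images_meet_in_zero).
Qed.
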